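(* Let $\Gamma$ be a finite simplicial graph and let $v_1,v_2,v_3$ be three consecutive vertices of a path in $\Gamma$ with $d(v_1,v_3)=2$. Let $f$ be a conjugating automorphism of $A_\Gamma$ with $f(v_1)=v_1$. Then $f(v_2)$ is represented by a reduced word $wv_2w^{-1}$ with $w\in\langle\mathrm{lk}(v_1)\rangle$, and $f(v_3)$ is represented by a reduced word $xyv_3y^{-1}x^{-1}$ with $x\in\langle\mathrm{lk}(v_1)\rangle$ and $y\in\langle\mathrm{st}(v_2)\rangle$.
   Context: $A_\Gamma$ is the right-angled Artin group with generators $V\Gamma$ and relations $[a,b]=1$ for edges $\{a,b\}$. $\mathrm{lk}(v)$ is the subgraph induced by the neighbours of $v$, $\mathrm{st}(v)$ that induced by $\mathrm{lk}(v)\cup\{v\}$, and for a subgraph $S$, $\langle S\rangle$ is the subgroup generated by its vertices. A word is reduced if it has minimal length among words representing the same element. An automorphism is conjugating if it maps each vertex generator to a conjugate of itself. *)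

From mathcomp Require Import all_boot.
From Stdlib Require Import Relations.Relation_Operators.
Set Implicit Arguments. Unset Strict Implicit. Unset Printing Implicit Defensive.

Section RAAG.
Variables (T : finType) (e : rel T).

(* a letter (v, true) is the generator v, (v, false) is v^{-1} *)
Definition letter := (T * bool)%type.
Definition word := seq letter.

Definition linv (a : letter) : letter := (a.1, ~~ a.2).
Definition winv (w : word) : word := rev (map linv w).
Definition gen (v : T) : word := [:: (v, true)].

Inductive raag_step : word -> word -> Prop :=
| step_cancel u v a : raag_step (u ++ [:: a; linv a] ++ v) (u ++ v)
| step_comm u v a b : e a.1 b.1 -> raag_step (u ++ [:: a; b] ++ v) (u ++ [:: b; a] ++ v).

Definition raag_eq : word -> word -> Prop := clos_refl_sym_trans word raag_step.

Definition reduced (w : word) : Prop :=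
  forall w', raag_eq w w' -> size w <= size w'.

Definition ext (phi : T -> word) (w : word) : word :=
  flatten (map (fun a : letter => if a.2 then phi a.1 else winv (phi a.1)) w).

Definition is_automorphism (phi : T -> word) : Prop :=
  (forall a b, e a b -> raag_eq (phi a ++ phi b) (phi b ++ phi a)) /\
  (forall u u', raag_eq (ext phi u) (ext phi u') -> raag_eq u u') /\
  (forall w, exists u, raag_eq (ext phi u) w).

Definition conjugating (phi : T -> word) : Prop :=
  forall v, exists g, raag_eq (phi v) (g ++ gen v ++ winv g).

Definition word_over (S : pred T) (w : word) : bool := all (fun a => S a.1) w.

Definition in_subgroup (S : pred T) (w : word) : Prop :=
  exists u, word_over S u /\ raag_eq w u.

Definition lk (v : T) : pred T := fun x => e v x.
Definition st (v : T) : pred T := fun x => (x == v) || e v x.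

End RAAG.

(** A word is reduced exactly when no letter [a] can be cancelled against a
    later [a^-1] all of whose intermediate letters commute with [a]: these
    cancellations are locally confluent modulo swaps of commuting letters, so
    equal words have normal forms of equal length.  Two consequences drive the
    proof.  If a generator [t] commutes with a reduced word [z], cancelling in
    [t z t^-1] peels letters off [z] and shows that all of them lie in st(t).
    And every conjugate [g v g^-1] equals a reduced conjugate [L v L^-1] with
    [L] a subsequence of [g].

    Write f(v2) = w v2 w^-1, reduced.  It commutes with f(v1) = v1, so [w] lies
    over st(v1); a last occurrence of v1^{+-1} in [w] could be cancelled across
    v2, which is adjacent to v1, so [w] lies over lk(v1).  Next write
    f(v3) = w (k v3 k^-1) w^-1 with the bracket reduced; conjugating the
    commutation of f(v2) and f(v3) by [w] shows that v2 commutes with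
    k v3 k^-1, so [k] lies over st(v2).  Reducing (w k) v3 (w k)^-1 along a
    subsequence of [w ++ k] keeps the shape x y with x over lk(v1) and y over
    st(v2). *)

From mathcomp Require Import all_boot.
From Stdlib Require Import Relations.Relation_Operators Relations.Operators_Properties Classical.
Set Implicit Arguments. Unset Strict Implicit. Unset Printing Implicit Defensive.

Ltac cat_norm := do 4! rewrite /= -?catA /= ?cats0.
Ltac by_cat := cat_norm; done.
Ltac exact_mod_cat := let H := fresh in move=> H; move: H; cat_norm => H; cat_norm; exact: H.

Lemma cat_cons_split (X : Type) (p1 p2 r1 r2 : seq X) x1 x2 :
  p1 ++ x1 :: r1 = p2 ++ x2 :: r2 ->
  [\/ [/\ p1 = p2, x1 = x2 & r1 = r2],
      (exists s, p2 = p1 ++ x1 :: s /\ r1 = s ++ x2 :: r2) |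
      (exists s, p1 = p2 ++ x2 :: s /\ r2 = s ++ x1 :: r1)].
Proof.
elim: p1 p2 => [|y p1 IH] [|z p2] /=; case.
- by move=> -> ->; constructor 1.
- by move=> -> ->; constructor 2; exists p2.
- by move=> -> <-; constructor 3; exists p1.
- move=> -> /IH [[-> -> ->]|[s [-> ->]]|[s [-> ->]]].
  + by constructor 1.
  + by constructor 2; exists s.
  + by constructor 3; exists s.
Qed.

Lemma subseq_cat_split (X : eqType) (L u w : seq X) : subseq L (u ++ w) ->
  exists u' w', [/\ L = u' ++ w', subseq u' u & subseq w' w].
Proof.
case/subseqP => m hm ->; exists (mask (take (size u) m) u), (mask (drop (size u) m) w).
split; [|exact: mask_subseq|exact: mask_subseq].
rewrite -mask_cat ?cat_take_drop // size_take_min hm size_cat.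
exact/minn_idPl/leq_addr.
Qed.

Section Words.
Variable T : finType.
Implicit Types (a : letter T) (u w : word T) (S : pred T).

Lemma linvK a : linv (linv a) = a.
Proof. by case: a => x b; rewrite /linv /= negbK. Qed.

Lemma winv_cat u w : winv (u ++ w) = winv w ++ winv u.
Proof. by rewrite /winv map_cat rev_cat. Qed.

Lemma winv_cons a u : winv (a :: u) = winv u ++ [:: linv a].
Proof. by rewrite /winv /= rev_cons cats1. Qed.

Lemma winvK u : winv (winv u) = u.
Proof.
rewrite /winv map_rev revK -map_comp.
by elim: u => //= a u ->; rewrite linvK.
Qed.

Lemma winv_gen (v : T) : winv (gen v) = [:: (v, false)].
Proof. by []. Qed.

Lemma word_over_cat S u w : word_over S (u ++ w) = word_over S u && word_over S w.
Proof. exact: all_cat. Qed.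

Lemma word_over_cons S a u : word_over S (a :: u) = S a.1 && word_over S u.
Proof. by []. Qed.

Lemma word_over_winv S u : word_over S (winv u) = word_over S u.
Proof. by rewrite /word_over /winv all_rev all_map. Qed.

Lemma sub_word_over S1 S2 u : {subset S1 <= S2} -> word_over S1 u -> word_over S2 u.
Proof. by move=> sS12; apply: sub_all => a /sS12. Qed.

Lemma word_over_subseq S u w : subseq u w -> word_over S w -> word_over S u.
Proof. by move=> /mem_subseq sub_uw /allP hw; apply/allP => a /sub_uw /hw. Qed.

Definition conjw u w := u ++ w ++ winv u.

Lemma conjw_cat g h u : conjw (g ++ h) u = conjw g (conjw h u).
Proof. by rewrite /conjw winv_cat -!catA. Qed.

Lemma word_over_conjw S g u : word_over S (conjw g u) = word_over S g && word_over S u.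
Proof. by rewrite /conjw !word_over_cat word_over_winv; case: (word_over S g); rewrite ?andbT. Qed.

End Words.

Ltac split_over :=
  repeat match goal with
  | H : is_true (word_over _ (_ ++ _)) |- _ => rewrite word_over_cat in H
  | H : is_true (word_over _ (_ :: _)) |- _ => rewrite word_over_cons in H
  | H : is_true (_ && _) |- _ =>
      let H1 := fresh "H" in let H2 := fresh "H" in case/andP: H => H1 H2
  end;
  rewrite ?word_over_cat ?word_over_cons /=; repeat (apply/andP; split); try done.

Section Raag.
Variables (T : finType) (e : rel T).
Hypothesis e_sym : symmetric e.
Hypothesis e_irr : irreflexive e.

Local Notation word := (word T).
Local Notation req := (raag_eq e).

(** * Equality in A_Gamma *)

Lemma req_refl w : req w w. Proof. exact: rst_refl. Qed.
Lemma req_sym w w' : req w w' -> req w' w. Proof. exact: rst_sym. Qed.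
Lemma req_trans w1 w2 w3 : req w1 w2 -> req w2 w3 -> req w1 w3.
Proof. exact: rst_trans. Qed.

Lemma raag_step_ctx p q u u' :
  raag_step e u u' -> raag_step e (p ++ u ++ q) (p ++ u' ++ q).
Proof.
case=> [u0 v0 a|u0 v0 a b hab].
- by have := step_cancel e (p ++ u0) (v0 ++ q) a; rewrite -!catA.
- by have := step_comm (p ++ u0) (v0 ++ q) hab; rewrite -!catA.
Qed.

Lemma req_ctx p q u u' : req u u' -> req (p ++ u ++ q) (p ++ u' ++ q).
Proof.
elim=> [x y s|x|x y _ IH|x y z _ IH1 _ IH2].
- exact/rst_step/raag_step_ctx.
- exact: req_refl.
- exact: req_sym.
- exact: req_trans IH1 IH2.
Qed.

Lemma req_cat u u' w w' : req u u' -> req w w' -> req (u ++ w) (u' ++ w').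
Proof.
move=> h1 h2; apply: (@req_trans _ (u' ++ w)).
- by have := req_ctx [::] w h1.
- by have := req_ctx u' [::] h2; rewrite !cats0.
Qed.

Lemma raag_step_winv u u' : raag_step e u u' -> raag_step e (winv u) (winv u').
Proof.
case=> [u0 v0 a|u0 v0 a b hab]; rewrite !(winv_cat, winv_cons) /= -!catA /=.
- by have := step_cancel e (winv v0) (winv u0) (linv (linv a)); rewrite linvK.
- by apply: step_comm; rewrite /= e_sym.
Qed.

Lemma req_winv u u' : req u u' -> req (winv u) (winv u').
Proof.
elim=> [x y s|x|x y _ IH|x y z _ IH1 _ IH2].
- exact/rst_step/raag_step_winv.
- exact: req_refl.
- exact: req_sym.
- exact: req_trans IH1 IH2.
Qed.

Lemma req_catV w : req (w ++ winv w) [::].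
Proof.
elim: w => [|a w IH] /=; first exact: req_refl.
rewrite winv_cons; apply: (@req_trans _ [:: a; linv a]).
  by have := req_ctx [:: a] [:: linv a] IH; rewrite /= -catA.
exact/rst_step/(step_cancel e [::] [::] a).
Qed.

Lemma req_Vcat w : req (winv w ++ w) [::].
Proof. by have := req_catV (winv w); rewrite winvK. Qed.

Lemma req_catlI p u w : req (p ++ u) (p ++ w) -> req u w.
Proof.
move=> h; have := req_ctx (winv p) [::] h; rewrite !cats0 !catA => h'.
apply: req_trans (req_trans h' _).
- by apply: req_sym; have := req_ctx [::] u (req_Vcat p).
- by have := req_ctx [::] w (req_Vcat p).
Qed.

Lemma req_catrI p u w : req (u ++ p) (w ++ p) -> req u w.
Proof.
move=> h; have := req_ctx [::] (winv p) h; rewrite /= -!catA => h'.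
apply: req_trans (req_trans h' _).
- by apply: req_sym; have := req_ctx u [::] (req_catV p); rewrite !cats0.
- by have := req_ctx w [::] (req_catV p); rewrite !cats0.
Qed.

Lemma reduced_infix p s q : reduced e (p ++ s ++ q) -> reduced e s.
Proof.
move=> h s' hs; have := h _ (req_ctx p q hs).
by rewrite !size_cat leq_add2l leq_add2r.
Qed.

Lemma req_conjw g g' u : req g g' -> req (conjw g u) (conjw g' u).
Proof. by move=> hg; apply: req_cat hg (req_cat (req_refl u) (req_winv hg)). Qed.

Lemma req_conjwK g h u : req (conjw g (conjw (winv g ++ h) u)) (conjw h u).
Proof.
rewrite -conjw_cat; apply: req_conjw.
by have := req_ctx [::] h (req_catV g); exact_mod_cat.
Qed.

Lemma req_conjwI g u w : req (conjw g u) (conjw g w) -> req u w.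
Proof. by move/req_catlI/req_catrI. Qed.

Definition wcommute u w := req (u ++ w) (w ++ u).

Lemma wcommute_sym u w : wcommute u w -> wcommute w u.
Proof. exact: req_sym. Qed.

Lemma wcommute_gen_letter v (c : letter T) : c.1 = v -> wcommute [:: c] (gen v).
Proof.
case: c => c [] /= ->; first exact: req_refl.
apply: req_trans (_ : req [::] _).
  exact/rst_step/(step_cancel e [::] [::] (v, false)).
exact/req_sym/rst_step/(step_cancel e [::] [::] (v, true)).
Qed.

Lemma wcommute_req u u' w w' :
  req u u' -> req w w' -> wcommute u w -> wcommute u' w'.
Proof.
move=> hu hw h; apply: req_trans (req_trans (req_cat (req_sym hu) (req_sym hw)) h) _.
exact: req_cat.
Qed.

Lemma wcommute_conjw g u : wcommute g u -> req (conjw g u) u.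
Proof.
move=> h; apply: req_trans (_ : req ((u ++ g) ++ winv g) _).
  by rewrite /conjw catA; apply: req_cat h (req_refl _).
by have := req_ctx u [::] (req_catV g); rewrite !cats0 catA.
Qed.

Lemma wcommute_conjwI g u w : wcommute (conjw g u) (conjw g w) -> wcommute u w.
Proof.
have collapse x y : req (conjw g x ++ conjw g y) (conjw g (x ++ y)).
  rewrite /conjw; have := req_ctx (g ++ x) (y ++ winv g) (req_Vcat g); exact_mod_cat.
move=> h; apply: (@req_conjwI g).
exact: req_trans (req_sym (collapse u w)) (req_trans h (collapse w u)).
Qed.

(** * Reduced words via cancellation normal forms *)

Definition cancel_step (w w' : word) := exists p m q a,
  [/\ w = p ++ a :: m ++ linv a :: q, word_over (lk e a.1) m & w' = p ++ m ++ q].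
Definition swap_step (w w' : word) := exists p q (a b : letter T),
  [/\ e a.1 b.1, w = p ++ a :: b :: q & w' = p ++ b :: a :: q].
Definition cancel_free (w : word) := forall w', ~ cancel_step w w'.
Definition cancel_rt := clos_refl_trans word cancel_step.
Definition swap_eq := clos_refl_trans word swap_step.
Definition normal_form w u := cancel_rt w u /\ cancel_free u.

Lemma cancel_stepI w w' p m q a : w = p ++ a :: m ++ linv a :: q -> w' = p ++ m ++ q ->
  word_over (lk e a.1) m -> cancel_step w w'.
Proof. by move=> -> -> h; exists p, m, q, a. Qed.

Lemma swap_stepI w w' p q (a b : letter T) : w = p ++ a :: b :: q ->
  w' = p ++ b :: a :: q -> e a.1 b.1 -> swap_step w w'.
Proof. by move=> -> -> h; exists p, q, a, b. Qed.

Lemma cancel_step_size w w' : cancel_step w w' -> size w = (size w').+2.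
Proof.
by case=> p [m [q [a [-> _ ->]]]]; rewrite !size_cat /= size_cat /= !addnS.
Qed.

Lemma swap_step_size w w' : swap_step w w' -> size w' = size w.
Proof. by case=> p [q [a [b [_ -> ->]]]]; rewrite !size_cat. Qed.

Lemma swap_step_sym w w' : swap_step w w' -> swap_step w' w.
Proof. by case=> p [q [a [b [h -> ->]]]]; exists p, q, b, a; rewrite e_sym. Qed.

Lemma swap_eq_sym w w' : swap_eq w w' -> swap_eq w' w.
Proof.
elim=> [x y s|x|x y z _ IH1 _ IH2].
- exact/rt_step/swap_step_sym.
- exact: rt_refl.
- exact: rt_trans IH2 IH1.
Qed.

Lemma swap_eq_across (a : letter T) m p q : word_over (lk e a.1) m ->
  swap_eq (p ++ a :: m ++ q) (p ++ m ++ a :: q).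
Proof.
elim: m p => [|x m IH] p /=; first by move=> _; exact: rt_refl.
case/andP => hx hm; apply: (@rt_trans _ _ _ ((p ++ [:: x]) ++ a :: m ++ q)).
  by apply: rt_step; apply: (swap_stepI (p:=p) (q:=m ++ q) (a:=a) (b:=x)) => //; by_cat.
by have := IH (p ++ [:: x]) hm; exact_mod_cat.
Qed.

Lemma swap_eq_req w w' : swap_eq w w' -> req w w'.
Proof.
elim=> [x y s|x|x y z _ IH1 _ IH2]; last exact: req_trans IH1 IH2.
- by case: s => p [q [a [b [h -> ->]]]]; exact/rst_step/(step_comm p q h).
- exact: req_refl.
Qed.

Lemma cancel_step_req w w' : cancel_step w w' -> req w w'.
Proof.
case=> p [m [q [a [-> hm ->]]]].
apply: req_trans (swap_eq_req (swap_eq_across p (linv a :: q) hm)) _.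
by apply: rst_step; have := step_cancel e (p ++ m) q a; rewrite -!catA.
Qed.

Lemma cancel_step_winv w z : cancel_step w z -> cancel_step (winv w) (winv z).
Proof.
case=> p [m [q [a [-> hm ->]]]].
apply: (cancel_stepI (p:=winv q) (m:=winv m) (q:=winv p) (a:=a)).
- rewrite !(winv_cat, winv_cons) ?linvK; by_cat.
- rewrite !winv_cat; by_cat.
- by rewrite word_over_winv.
Qed.

Lemma swap_step_cancel w w' z : swap_step w w' -> cancel_step w z ->
  exists z', cancel_step w' z' /\ (z = z' \/ swap_step z z').
Proof.
case=> p [q [a [b [hab -> ->]]]] [p1 [m [q1 [c [E hm ->]]]]].
case: (cat_cons_split E) => {E} [[E1 E2 E]|[s [E1 E]]|[s [E1 E]]].
- subst p1 c; case: m hm E => [|x m] hm E /=.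
    by case: E => Eb _; rewrite Eb /= e_irr in hab.
  case: E => Ex Eq; subst x q.
  exists (p ++ b :: m ++ q1); split; last by left.
  apply: (cancel_stepI (p:=p ++ [:: b]) (m:=m) (q:=q1) (a:=a)); try by_cat; by split_over.
- subst p1; case: s E => [|x s] /= E.
    case: E => Ex Eq; subst c q.
    exists (p ++ a :: m ++ q1); split; last by left; by_cat.
    apply: (cancel_stepI (p:=p) (m:=a :: m) (q:=q1) (a:=b)); try by_cat.
    by rewrite word_over_cons /lk e_sym hab hm.
  case: E => Ex Eq; subst x q.
  exists (p ++ b :: a :: s ++ m ++ q1); split.
    by apply: (cancel_stepI (p:=p ++ b :: a :: s) (m:=m) (q:=q1) (a:=c)) => //; by_cat.
  by right; apply: (swap_stepI (p:=p) (q:=s ++ m ++ q1) (a:=a) (b:=b)) => //; by_cat.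
- subst p; case: (cat_cons_split E) => {E} [[E1 Ec E3]|[t [E1 E3]]|[t [E1 E]]].
  + subst m a q1; rewrite /= in hab.
    exists (p1 ++ s ++ b :: q); split; last by left; by_cat.
    apply: (cancel_stepI (p:=p1) (m:=s ++ [:: b]) (q:=q) (a:=c)); try by_cat.
    by rewrite word_over_cat hm /= /lk hab.
  + subst s q1; exists (p1 ++ m ++ t ++ b :: a :: q); split.
      by apply: (cancel_stepI (p:=p1) (m:=m) (q:=t ++ b :: a :: q) (a:=c)) => //; by_cat.
    by right; apply: (swap_stepI (p:=p1 ++ m ++ t) (q:=q) (a:=a) (b:=b)) => //; by_cat.
  + subst m; case: t E hm => [|y t] /= E hm.
      case: E => Eb Eq; subst b q.
      exists (p1 ++ s ++ a :: q1); split; last by left; by_cat.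
      apply: (cancel_stepI (p:=p1) (m:=s) (q:=a :: q1) (a:=c)); try by_cat; by split_over.
    case: E => Ey Eq; subst y q.
    exists (p1 ++ s ++ b :: a :: t ++ q1); split.
      apply: (cancel_stepI (p:=p1) (m:=s ++ b :: a :: t) (q:=q1) (a:=c)); try by_cat; by split_over.
    by right; apply: (swap_stepI (p:=p1 ++ s) (q:=t ++ q1) (a:=a) (b:=b)) => //; by_cat.
Qed.

Lemma cancel_step_peak_right p1 a m1 q1 s b m2 q2 :
  word_over (lk e a.1) m1 -> word_over (lk e b.1) m2 ->
  m1 ++ linv a :: q1 = s ++ b :: m2 ++ linv b :: q2 ->
  [\/ p1 ++ m1 ++ q1 = (p1 ++ a :: s) ++ m2 ++ q2,
      (exists y, cancel_step (p1 ++ m1 ++ q1) y /\ cancel_step ((p1 ++ a :: s) ++ m2 ++ q2) y) |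
      swap_eq (p1 ++ m1 ++ q1) ((p1 ++ a :: s) ++ m2 ++ q2)].
Proof.
move=> h1 h2 E; case: (cat_cons_split E) => {E} [[E1 Eb E3]|[t [E1 E3]]|[t [E1 E]]].
- subst m1 b q1; constructor 3; apply: swap_eq_sym.
  rewrite linvK -catA /=.
  have := @swap_eq_across a (s ++ m2) p1 q2; rewrite -!catA; apply.
  by rewrite /= in h2; rewrite word_over_cat h1 h2.
- subst s q1; constructor 2; exists (p1 ++ m1 ++ t ++ m2 ++ q2); split.
    by apply: (cancel_stepI (p:=p1 ++ m1 ++ t) (m:=m2) (q:=q2) (a:=b)) => //; by_cat.
  by apply: (cancel_stepI (p:=p1) (m:=m1) (q:=t ++ m2 ++ q2) (a:=a)) => //; by_cat.
- subst m1; case: (cat_cons_split E) => {E} [[Em Eab Eq]|[t' [E1' E2]]|[t' [E1' E2]]].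
  + have Eab' : b = a by rewrite -(linvK b) Eab linvK.
    by move: h1; rewrite Eab' word_over_cat word_over_cons /lk e_irr /= andbF.
  + subst t q2; constructor 2; exists (p1 ++ s ++ m2 ++ t' ++ q1); split.
      by apply: (cancel_stepI (p:=p1 ++ s) (m:=m2) (q:=t' ++ q1) (a:=b)) => //; by_cat.
    apply: (cancel_stepI (p:=p1) (m:=s ++ m2 ++ t') (q:=q1) (a:=a)); try by_cat; by split_over.
  + subst m2 q1; constructor 2; exists (p1 ++ s ++ t ++ t' ++ q2); split.
      apply: (cancel_stepI (p:=p1 ++ s) (m:=t ++ t') (q:=q2) (a:=b)); try by_cat; by split_over.
    apply: (cancel_stepI (p:=p1) (m:=s ++ t) (q:=t' ++ q2) (a:=a)); try by_cat; by split_over.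
Qed.

(* Local confluence modulo swaps. *)
Lemma cancel_step_peak w z1 z2 : cancel_step w z1 -> cancel_step w z2 ->
  [\/ z1 = z2, (exists y, cancel_step z1 y /\ cancel_step z2 y) | swap_eq z1 z2].
Proof.
case=> p1 [m1 [q1 [a [-> h1 ->]]]] [p2 [m2 [q2 [b [E h2 ->]]]]].
case: (cat_cons_split E) => {E} [[E1 E2 E]|[s [E1 E]]|[s [E1 E]]].
- subst p2 b; case: (cat_cons_split E) => {E} [[E1 _ E3]|[s [E1 _]]|[s [E1 _]]].
  + by subst m2 q2; constructor 1.
  + by subst m2; move: h2; rewrite word_over_cat word_over_cons /lk /= e_irr andbF.
  + by subst m1; move: h1; rewrite word_over_cat word_over_cons /lk /= e_irr andbF.
- subst p2; case: (cancel_step_peak_right p1 h1 h2 E) => [->|[y [? ?]]|?].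
  + by constructor 1.
  + by constructor 2; exists y.
  + by constructor 3.
- subst p1; case: (cancel_step_peak_right p2 h2 h1 E) => [->|[y [? ?]]|?].
  + by constructor 1.
  + by constructor 2; exists y.
  + by constructor 3; apply: swap_eq_sym.
Qed.

Lemma cancel_rt_size w u : cancel_rt w u -> size u <= size w.
Proof.
elim=> [x y s|x|x y z _ IH1 _ IH2] //; last exact: leq_trans IH2 IH1.
by rewrite (cancel_step_size s) -addn2 leq_addr.
Qed.

Lemma cancel_rt_first w u :
  cancel_rt w u -> w = u \/ exists z, cancel_step w z /\ cancel_rt z u.
Proof.
case/clos_rt_rt1n_iff => [|y z s h]; first by left.
by right; exists y; split => //; apply/clos_rt_rt1n_iff.
Qed.

Lemma cancel_free_rt w u : cancel_free w -> cancel_rt w u -> u = w.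
Proof. by move=> hi /cancel_rt_first [->|[z [s _]]] //; case: (hi z). Qed.

Lemma not_cancel_free w : ~ cancel_free w -> exists z, cancel_step w z.
Proof. by move=> h; apply: NNPP => h'; apply: h => z hz; apply: h'; exists z. Qed.

Lemma normal_form_step w z u : cancel_step w z -> normal_form z u -> normal_form w u.
Proof. by move=> s [c i]; split => //; apply: rt_trans (rt_step _ _ _ _ s) c. Qed.

Lemma normal_form_exists w : exists u, normal_form w u.
Proof.
elim: {w}(size w).+1 {-2}w (ltnSn (size w)) => [//|n IH] w hw.
case: (classic (cancel_free w)) => hi; first by exists w; split => //; apply: rt_refl.
have [z hz] := not_cancel_free hi.
have [u hu] : exists u, normal_form z u.
  by apply: IH; move: hw; rewrite (cancel_step_size hz) !ltnS => /ltnW.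
by exists u; apply: normal_form_step hz hu.
Qed.

Definition nf_size_unique w :=
  forall u1 u2, normal_form w u1 -> normal_form w u2 -> size u1 = size u2.
Definition nf_size_swap w := forall w' u u',
  swap_step w w' -> normal_form w u -> normal_form w' u' -> size u = size u'.

Section NormalFormInduction.
Variable n : nat.
Hypothesis IH : forall w, size w < n -> nf_size_unique w /\ nf_size_swap w.

Lemma nf_size_swap_eq z1 z2 u1 u2 : swap_eq z1 z2 -> size z1 < n ->
  normal_form z1 u1 -> normal_form z2 u2 -> size u1 = size u2.
Proof.
move=> /clos_rt_rt1n_iff h; elim: h u1 => [x|x y z hs _ IHc] u1 hx n1 n2.
  exact: (IH hx).1.
have [uy ny] := normal_form_exists y.
rewrite ((IH hx).2 y u1 uy hs n1 ny); apply: IHc ny n2.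
by rewrite (swap_step_size hs).
Qed.

Lemma nf_size_unique_le w : size w <= n -> nf_size_unique w.
Proof.
move=> hw u1 u2 [c1 i1] [c2 i2].
case: (cancel_rt_first c1) => [Ew|[z1 [s1 c1']]].
  by rewrite -Ew in i1 *; rewrite (cancel_free_rt i1 c2).
case: (cancel_rt_first c2) => [Ew|[z2 [s2 c2']]].
  by rewrite -Ew in i2; case: (i2 _ s1).
have hz1 : size z1 < n by move: hw; rewrite (cancel_step_size s1) => /ltnW.
have hz2 : size z2 < n by move: hw; rewrite (cancel_step_size s2) => /ltnW.
case: (cancel_step_peak s1 s2) => [Ez|[y [t1 t2]]|hs].
- by rewrite Ez in c1'; exact: (IH hz2).1 u1 u2 (conj c1' i1) (conj c2' i2).
- have [uy ny] := normal_form_exists y.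
  rewrite ((IH hz1).1 u1 uy (conj c1' i1)); last exact: normal_form_step t1 ny.
  by rewrite ((IH hz2).1 u2 uy (conj c2' i2)) //; exact: normal_form_step t2 ny.
- exact: nf_size_swap_eq hs hz1 (conj c1' i1) (conj c2' i2).
Qed.

Lemma nf_size_swap_le w : size w <= n -> nf_size_swap w.
Proof.
move=> hw w' u u' hs n1 n2.
have hw' : size w' <= n by rewrite (swap_step_size hs).
case: (cancel_rt_first n1.1) => [Ew|[z [hz _]]].
  have hi' : cancel_free w'.
    move=> z' /(swap_step_cancel (swap_step_sym hs)) [z [s _]].
    by case: n1 => _ /(_ z); rewrite -Ew.
  by rewrite -Ew (cancel_free_rt hi' n2.1) (swap_step_size hs).
have [z' [hz' Ez]] := swap_step_cancel hs hz.
have [uz nz] := normal_form_exists z.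
have [uz' nz'] := normal_form_exists z'.
rewrite (nf_size_unique_le hw n1 (normal_form_step hz nz)).
rewrite (nf_size_unique_le hw' n2 (normal_form_step hz' nz')).
have hzn : size z < n by move: hw; rewrite (cancel_step_size hz) => /ltnW.
case: Ez => [Ez|hzz]; first by rewrite -Ez in nz'; exact: (IH hzn).1 _ _ nz nz'.
exact: (IH hzn).2 z' uz uz' hzz nz nz'.
Qed.

End NormalFormInduction.

Lemma nf_size_invariant w : nf_size_unique w /\ nf_size_swap w.
Proof.
elim: {w}(size w).+1 {-2}w (ltnSn (size w)) => [//|n IH] w hw.
by split; [apply: (nf_size_unique_le IH) | apply: (nf_size_swap_le IH)].
Qed.

Lemma req_normal_form_size w w' u u' :
  req w w' -> normal_form w u -> normal_form w' u' -> size u = size u'.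
Proof.
move=> h; elim: h u u' => [x y s|x|x y _ IH|x y z _ IH1 _ IH2] u u' n1 n2.
- case: s n1 n2 => [u0 v0 a|u0 v0 a b hab] n1 n2.
    apply: (nf_size_invariant _).1 n1 (normal_form_step _ n2).
    exact: (cancel_stepI (p:=u0) (m:=[::]) (q:=v0) (a:=a)).
  apply: (nf_size_invariant _).2 n1 n2.
  exact: (swap_stepI (p:=u0) (q:=v0) (a:=a) (b:=b)).
- exact: (nf_size_invariant _).1 n1 n2.
- by symmetry; apply: IH.
- have [uy ny] := normal_form_exists y.
  by rewrite (IH1 u uy) // (IH2 uy u').
Qed.

Lemma cancel_free_reduced w : cancel_free w -> reduced e w.
Proof.
move=> hi w' hr; have [u' n'] := normal_form_exists w'.
have nw : normal_form w w by split => //; apply: rt_refl.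
by rewrite (req_normal_form_size hr nw n'); exact: cancel_rt_size n'.1.
Qed.

Lemma reduced_cancel_free w : reduced e w -> cancel_free w.
Proof.
move=> hr z s; have := hr z (cancel_step_req s).
by rewrite (cancel_step_size s) ltnNge leqnSn.
Qed.

Lemma not_reduced_cancel_step w : ~ reduced e w -> exists z, cancel_step w z.
Proof. by move=> h; apply: not_cancel_free => hi; apply/h/cancel_free_reduced. Qed.

(** * Centralisers of generators *)

Lemma wcommute_lk (a : letter T) m : word_over (lk e a.1) m -> wcommute [:: a] m.
Proof. by move=> hm; have := swap_eq_req (swap_eq_across [::] [::] hm); rewrite /= cats0. Qed.

Lemma cancel_step_conj_gen t z y : cancel_free z -> cancel_step (conjw (gen t) z) y ->
  [\/ word_over (lk e t) z,
      exists m s, z = m ++ (t, false) :: s /\ word_over (lk e t) m |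
      exists p m, z = p ++ (t, true) :: m /\ word_over (lk e t) m].
Proof.
move=> hz [[|c p] [m [q [a [E hm _]]]]]; rewrite /conjw winv_gen /= in E; case: E.
  move=> Ea; rewrite -Ea /= in hm *.
  case/(@cat_cons_split (letter T)) => [[-> _ _]|[s [_ Es]]|[s [-> _]]].
  - by constructor 1.
  - by case: s Es.
  - by constructor 2; exists m, s.
move=> _; case/lastP: q => [|q b] E.
  have /rcons_inj[-> Ea] : rcons z (t, false) = rcons (p ++ a :: m) (linv a).
    by rewrite -!cats1 E -catA.
  by case: a Ea hm {E} => a1 [] //= <- hm _; constructor 3; exists p, m.
have /rcons_inj[Ez _] : rcons z (t, false) = rcons (p ++ a :: m ++ linv a :: q) b.
  by rewrite -!cats1 E -cats1; by_cat.
by case: (hz (p ++ m ++ q)); apply: (cancel_stepI (p:=p) (m:=m) (q:=q) (a:=a)).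
Qed.

Lemma wcommute_gen_peel_left t m s : word_over (lk e t) m ->
  wcommute (gen t) (m ++ (t, false) :: s) -> wcommute (gen t) s.
Proof.
move=> hm hc.
have hms : req (gen t ++ m ++ (t, false) :: s) (m ++ s).
  apply: req_trans (_ : req ((m ++ gen t) ++ (t, false) :: s) _).
    by rewrite catA; apply: req_cat (wcommute_lk (a := (t, true)) hm) (req_refl _).
  by apply: rst_step; have := step_cancel e m s (t, true); rewrite -catA.
have hs : req s ((t, false) :: s ++ gen t).
  by apply: (@req_catlI m); have := req_trans (req_sym hms) hc; rewrite -catA.
apply: req_trans (req_cat (req_refl (gen t)) hs) _.
exact/rst_step/(step_cancel e [::] (s ++ gen t) (t, true)).
Qed.

Lemma wcommute_gen_peel_right t p m : word_over (lk e t) m ->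
  wcommute (gen t) (p ++ (t, true) :: m) -> wcommute (gen t) p.
Proof.
move=> hm hc.
have hpm : req ((p ++ (t, true) :: m) ++ gen t) ((p ++ [:: (t, true); (t, true)]) ++ m).
  have := req_ctx (p ++ [:: (t, true)]) [::] (req_sym (wcommute_lk (a := (t, true)) hm)).
  exact_mod_cat.
have : req ((gen t ++ p ++ gen t) ++ m) ((p ++ gen t ++ gen t) ++ m).
  by have := req_trans hc hpm; exact_mod_cat.
by move/req_catrI; rewrite !catA => /req_catrI.
Qed.

Lemma lk_sub_st t : {subset lk e t <= st e t}.
Proof. by move=> x; rewrite !unfold_in /st /lk => ->; exact: orbT. Qed.

Lemma centralizer_st t z : reduced e z -> wcommute (gen t) z -> word_over (st e t) z.
Proof.
elim: {z}(size z).+1 {-2}z (ltnSn (size z)) => [//|n IH] z hn hr hc.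
have [y hy] : exists y, cancel_step (conjw (gen t) z) y.
  apply: not_reduced_cancel_step => hr'; have := hr' z (wcommute_conjw hc).
  by rewrite /conjw !size_cat /= addnS ltnNge leqW // leq_addr.
case: (cancel_step_conj_gen (reduced_cancel_free hr) hy) => [|[m [s [Ez hm]]]|[p [m [Ez hm]]]].
- exact: sub_word_over (@lk_sub_st t).
- rewrite Ez word_over_cat word_over_cons (sub_word_over (@lk_sub_st t) hm) /st eqxx /=.
  rewrite Ez in hn hr hc; apply: IH (wcommute_gen_peel_left hm hc).
    by move: hn; rewrite size_cat /= addnS !ltnS; apply: leq_trans; rewrite ltnS leq_addl.
  by apply: (@reduced_infix (m ++ [:: (t, false)]) _ [::]); rewrite cats0 -catA.
- rewrite Ez word_over_cat word_over_cons (sub_word_over (@lk_sub_st t) hm) /st eqxx /= andbT.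
  rewrite Ez in hn hr hc; apply: IH (wcommute_gen_peel_right hm hc).
    by move: hn; rewrite size_cat /= addnS !ltnS; apply: leq_trans; rewrite ltnS leq_addr.
  exact: (@reduced_infix [::] _ ((t, true) :: m)).
Qed.

(** * Reduced conjugates of generators *)

Definition conj_shrinkable v L := exists L', [/\ subseq L' L, size L' < size L &
  req (conjw L (gen v)) (conjw L' (gen v))].

Lemma shrinkable_cancel v L z : cancel_step L z -> conj_shrinkable v L.
Proof.
move=> s; exists z; split.
- case: s => p [m [q [a [-> _ ->]]]]; apply: cat_subseq (subseq_refl p) _.
  apply: subseq_trans (subseq_cons _ a).
  exact: cat_subseq (subseq_refl m) (subseq_cons q (linv a)).
- by rewrite (cancel_step_size s).
- exact/req_conjw/cancel_step_req.
Qed.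

Lemma shrinkable_gen v L A c B : L = A ++ c :: B -> c.1 = v -> word_over (lk e v) B ->
  conj_shrinkable v L.
Proof.
move=> -> hc hB; exists A; split.
- exact: prefix_subseq.
- by rewrite size_cat /= addnS ltnS leq_addr.
- rewrite -[c :: B]/([:: c] ++ B) !conjw_cat; apply: req_ctx.
  apply: req_trans (wcommute_conjw (wcommute_gen_letter hc)).
  exact/req_ctx/wcommute_conjw/wcommute_sym/(wcommute_lk (a := (v, true))).
Qed.

Lemma shrinkable_lk v L p a s : L = p ++ a :: s -> word_over (lk e a.1) s -> e a.1 v ->
  conj_shrinkable v L.
Proof.
move=> -> hs hv; exists (p ++ s); split.
- exact: cat_subseq (subseq_refl p) (subseq_cons s a).
- by rewrite !size_cat /= addnS ltnS.
- rewrite -[a :: s]/([:: a] ++ s) !conjw_cat; apply: req_ctx.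
  apply/wcommute_conjw/wcommute_lk.
  by rewrite /conjw !word_over_cat word_over_winv hs /= /lk hv.
Qed.

Lemma cancel_step_conj_shrinkable v L y :
  cancel_step (conjw L (gen v)) y -> conj_shrinkable v L.
Proof.
case=> p [m [q [a [E hm _]]]].
case: (cat_cons_split (E : L ++ (v, true) :: winv L = _))
  => {E} [[E1 Ea E3]|[s [E1 E2]]|[s [E1 E2]]].
- rewrite -Ea in E3 hm.
  apply: (shrinkable_gen (A := winv q) (c := (v, true)) (B := winv m)) => //.
    by rewrite -(winvK L) E3 winv_cat winv_cons; by_cat.
  by rewrite word_over_winv.
- have h : cancel_step (winv L) (s ++ m ++ q).
    by rewrite E2; apply: (cancel_stepI (p := s) (m := m) (q := q) (a := a)).
  by have := cancel_step_winv h; rewrite winvK; exact: shrinkable_cancel.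
- case: (cat_cons_split E2) => {E2} [[Em Ea Eq]|[t [Es Eq]]|[t [Em Eq]]].
  + have Ev : v = a.1 := esym (congr1 fst Ea).
    by apply: (shrinkable_gen (A := p) (c := a) (B := s)); rewrite // Ev -Em.
  + apply: shrinkable_cancel; rewrite E1 Es.
    exact: (cancel_stepI (p := p) (m := m) (q := t) (a := a)).
  + rewrite Em in hm; apply: (shrinkable_lk (p := p) (a := a) (s := s)) => //; by split_over.
Qed.

Lemma conj_gen_reduce v L : exists L', [/\ subseq L' L, reduced e (conjw L' (gen v)) &
  req (conjw L (gen v)) (conjw L' (gen v))].
Proof.
elim: {L}(size L).+1 {-2}L (ltnSn (size L)) => [//|n IH] L hL.
case: (classic (reduced e (conjw L (gen v)))) => hr.
  by exists L; split; [exact: subseq_refl | | exact: req_refl].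
have [y /cancel_step_conj_shrinkable [L'' [hs hsz hq]]] := not_reduced_cancel_step hr.
have [L' [hs' hr' hq']] := IH L'' (leq_trans hsz hL).
by exists L'; split => //; [exact: subseq_trans hs' hs | exact: req_trans hq hq'].
Qed.

Lemma last_letter_split t h : word_over (st e t) h -> word_over (lk e t) h \/
  exists h1 c h2, [/\ h = h1 ++ c :: h2, c.1 = t & word_over (lk e t) h2].
Proof.
elim: h => [|x h IH]; first by left.
rewrite !word_over_cons => /andP[hx /IH [hl|[h1 [c [h2 [-> Ec hl]]]]]].
- case: (eqVneq x.1 t) => Ex; first by right; exists [::], x, h.
  by left; move: hx; rewrite /st (negPf Ex) /= /lk => ->.
- by right; exists (x :: h1), c, h2.
Qed.

Lemma reduced_conj_st_lk t v h : e t v -> reduced e (conjw h (gen v)) ->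
  word_over (st e t) h -> word_over (lk e t) h.
Proof.
move=> htv hr /last_letter_split [//|[h1 [c [h2 [Eh Ec hl]]]]].
exfalso; apply: (reduced_cancel_free hr).
apply: (cancel_stepI (p := h1) (m := conjw h2 (gen v)) (q := winv h1) (a := c)).
- by rewrite Eh /conjw !(winv_cat, winv_cons); by_cat.
- by [].
- by rewrite Ec /conjw !word_over_cat word_over_winv hl /= /lk htv.
Qed.

Lemma in_subgroup_word_over S w : word_over S w -> in_subgroup e S w.
Proof. by exists w; split => //; exact: req_refl. Qed.

Lemma commuting_conj_gen_lk v1 v2 g : e v1 v2 -> wcommute (gen v1) (conjw g (gen v2)) ->
  exists w, [/\ word_over (lk e v1) w, reduced e (conjw w (gen v2)) &
    req (conjw g (gen v2)) (conjw w (gen v2))].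
Proof.
move=> h12 hc; have [w [_ hr hq]] := conj_gen_reduce v2 g.
exists w; split => //.
have := centralizer_st hr (wcommute_req (req_refl _) hq hc).
rewrite word_over_conjw => /andP[hw _].
exact: reduced_conj_st_lk h12 hr hw.
Qed.

Lemma commuting_conj_gen_st S v2 v3 h g : word_over S h ->
  wcommute (conjw h (gen v2)) (conjw g (gen v3)) ->
  exists x y, [/\ word_over S x, word_over (st e v2) y,
    reduced e (conjw x (conjw y (gen v3))) &
    req (conjw g (gen v3)) (conjw x (conjw y (gen v3)))].
Proof.
move=> hh hc; have [k [_ hrk hqk]] := conj_gen_reduce v3 (winv h ++ g).
have hg : req (conjw g (gen v3)) (conjw h (conjw k (gen v3))).
  exact: req_trans (req_sym (req_conjwK h g _)) (req_ctx h (winv h) hqk).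
have hck : wcommute (gen v2) (conjw k (gen v3)).
  by apply: (@wcommute_conjwI h); exact: wcommute_req (req_refl _) hg hc.
have := centralizer_st hrk hck; rewrite word_over_conjw => /andP[hk _].
have [L [hL hr hq]] := conj_gen_reduce v3 (h ++ k).
have [x [y [EL hx hy]]] := subseq_cat_split hL.
exists x, y; rewrite -conjw_cat -EL; split => //.
- exact: word_over_subseq hx hh.
- exact: word_over_subseq hy hk.
- by apply: req_trans hg _; rewrite -conjw_cat.
Qed.

End Raag.

Theorem lemma5p3 (T : finType) (e : rel T)
  (e_sym : symmetric e) (e_irr : irreflexive e)
  (v1 v2 v3 : T)
  (h12 : e v1 v2) (h23 : e v2 v3)
  (hd13 : v1 != v3 /\ ~~ e v1 v3) (* d(v1, v3) = 2, given the path v1 - v2 - v3 *)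
  (f : T -> word T)
  (hf : is_automorphism e f) (hc : conjugating e f)
  (hfix : raag_eq e (f v1) (gen v1)) :
  (exists w : word T,
      in_subgroup e (lk e v1) w /\
      reduced e (w ++ gen v2 ++ winv w) /\
      raag_eq e (f v2) (w ++ gen v2 ++ winv w)) /\
  (exists x y : word T,
      in_subgroup e (lk e v1) x /\ in_subgroup e (st e v2) y /\
      reduced e (x ++ y ++ gen v3 ++ winv y ++ winv x) /\
      raag_eq e (f v3) (x ++ y ++ gen v3 ++ winv y ++ winv x)).
Proof.
have [hcomm _] := hf.
have [g2 hg2] := hc v2; have [g3 hg3] := hc v3.
have [w [hw hrw hqw]] :=
  commuting_conj_gen_lk e_sym e_irr h12 (wcommute_req hfix hg2 (hcomm v1 v2 h12)).
have hf2 : raag_eq e (f v2) (conjw w (gen v2)) := req_trans hg2 hqw.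
have [x [y [hx hy hr hq]]] :=
  commuting_conj_gen_st e_sym e_irr hw (wcommute_req hf2 hg3 (hcomm v2 v3 h23)).
rewrite /conjw -!catA in hr hq.
split.
  exists w; split; first exact: in_subgroup_word_over.
  by split.
exists x, y; do 2 (split; first exact: in_subgroup_word_over).
by split; last exact: req_trans hg3 hq.
Qed.
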